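(* Let $m$, $t$, $c$, $\beta$, $\mathcal{C}_{\mathrm{MU}}$ and the markers be as in the context. A uniformly random string $\mathbf{z}\in\{0,1\}^m$ is legit with probability $1-1/\operatorname{poly}(m)$.
   Context: Logarithms are base 2. Let $t\ge1$ and $m>t$ be integers, let $c\ge 3$ be an integer, and let $\beta=32$. A mutually uncorrelated (MU) code is a set of binary strings of equal length such that no nonempty proper prefix of any codeword equals a suffix of any (possibly the same) codeword. Let $\mathcal{C}_{\mathrm{MU}}$ be an MU code of length $c\log m$ with $|\mathcal{C}_{\mathrm{MU}}|\ge \frac{2^{c\log m}}{\beta c\log m}$. The markers $\mathbf{m}_0,\ldots,\mathbf{m}_t$ are the $t+1$ lexicographically first codewords of $\mathcal{C}_{\mathrm{MU}}$. For $\mathbf{z}\in\{0,1\}^m$, any occurrence (as a contiguous substring) of a codeword of $\mathcal{C}_{\mathrm{MU}}$ in $\mathbf{z}$ is called a level-$0$ signature. A string $\mathbf{z}\in\{0,1\}^m$ is legit if: (I) every interval (contiguous substring) of $\mathbf{z}$ of length $2\beta c\log^2 m+c\log m-1$ contains a level-$0$ signature; (II) every two non-overlapping substrings of $\mathbf{z}$ of length $c\log m$ are distinct; (III) $\mathbf{z}$ contains none of the markers $\mathbf{m}_0,\ldots,\mathbf{m}_t$ as a substring. *)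

From mathcomp Require Import all_boot.
Set Implicit Arguments. Unset Strict Implicit. Unset Printing Implicit Defensive.

(* log m (base 2), rounded up so that c * log m is an integer length. *)
Definition lg (m : nat) : nat := up_log 2 m.

Definition beta : nat := 32.

Definition sub (z : seq bool) (i n : nat) : seq bool := take n (drop i z).

Fixpoint lexlt (u v : seq bool) : bool :=
  match u, v with
  | x :: u', y :: v' => (~~ x && y) || ((x == y) && lexlt u' v')
  | [::], _ :: _ => true
  | _, _ => false
  end.

Definition mu_code (n : nat) (C : seq (seq bool)) : bool :=
  all (fun u => all (fun v =>
    all (fun k => (0 < k) ==> (take k u != drop (n - k) v)) (iota 0 n)) C) C.

(* w is one of the markers m_0..m_t, i.e. one of the t+1 lexicographically
   first codewords of C: w is a codeword with at most t codewords below it. *)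
Definition is_marker (C : seq (seq bool)) (t : nat) (w : seq bool) : bool :=
  (w \in C) && (count (fun u => lexlt u w) C <= t).

Definition ell (c m : nat) : nat := 2 * beta * c * (lg m) ^ 2 + c * lg m - 1.

Definition legit (c m t : nat) (C : seq (seq bool)) (z : seq bool) : bool :=
  let n := c * lg m in
  let L := ell c m in
  [&& (* (I) every interval of length L contains a level-0 signature *)
      all (fun i => (i + L <= size z) ==>
             has (fun j => (j + n <= L) && (sub z (i + j) n \in C)) (iota 0 L))
          (iota 0 (size z).+1),
      all (fun i => all (fun j => ((i + n <= j) && (j + n <= size z)) ==>
             (sub z i n != sub z j n)) (iota 0 (size z).+1)) (iota 0 (size z).+1)
    &
      all (fun i => (i + n <= size z) ==> ~~ is_marker C t (sub z i n))
          (iota 0 (size z).+1)].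

From mathcomp Require Import all_boot zify.
Set Implicit Arguments. Unset Strict Implicit. Unset Printing Implicit Defensive.

(* Count the strings of length m that are not legit, by a union bound over the
   positions where each of the three conditions can fail.
   (I) A window of length L without a codeword contains K = 32 log m disjoint
   blocks of length 2n - 1 (n = c log m) in which no codeword starts at any of
   the first n offsets. As C is mutually uncorrelated, two codeword occurrences
   starting less than n apart are impossible, so these n events are disjoint
   and a block contains a codeword with probability n |C| / 2^n >= 1/32. The
   blocks are independent, so the window fails with probability <= (31/32)^K.
   (II) Two fixed non-overlapping windows of length n agree with probability
   2^-n, and (III) a fixed window holds a marker with probability (t+1) 2^-n.
   Summing over the at most (m+1)^2 positions gives a failure probability
   below 2^-(log m / 8 + 1) <= m^(-1/8). *)

Lemma count_predU_le (T : Type) (a b : pred T) s :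
  count (predU a b) s <= count a s + count b s.
Proof. by rewrite -count_predUI leq_addr. Qed.

Lemma count_not_and3_le (T : Type) (a b c : pred T) s :
  count (fun x => ~~ [&& a x, b x & c x]) s <=
  count (fun x => ~~ a x) s + count (fun x => ~~ b x) s + count (fun x => ~~ c x) s.
Proof.
apply: leq_trans (_ : count (predU (fun x => ~~ a x)
                              (predU (fun x => ~~ b x) (fun x => ~~ c x))) s <= _).
  by apply: sub_count => x; rewrite /= !negb_and.
rewrite -addnA; apply: leq_trans (count_predU_le _ _ _) _.
by rewrite leq_add2l count_predU_le.
Qed.

Lemma count_not_all_le (T I : Type) (F : T -> pred I) (s : seq I) (l : seq T) :
  count (fun z => ~~ all (F z) s) l <= \sum_(i <- s) count (fun z => ~~ F z i) l.
Proof.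
elim: s => [|i s IH] /=; first by rewrite big_nil (@eq_count _ _ pred0) ?count_pred0.
rewrite big_cons (eq_count (fun z => negb_and (F z i) _)).
by apply: leq_trans (count_predU_le _ _ _) _; rewrite leq_add2l.
Qed.

Lemma sum_count_disjoint (I : eqType) (T : Type) (E : I -> pred T) (s : seq I) l :
  uniq s -> (forall x, {in s &, forall d d', E d x -> E d' x -> d = d'}) ->
  \sum_(d <- s) count (E d) l = count (fun x => has (E^~ x) s) l.
Proof.
elim: s => [_ _|d s IH /= /andP[ds us] Euniq].
  by rewrite big_nil (@eq_count _ _ pred0) ?count_pred0.
rewrite big_cons IH //; last by move=> x d1 d2 d1s d2s; apply: Euniq; rewrite inE ?d1s ?d2s orbT.
rewrite -count_predUI (@eq_count _ (predI _ _) pred0) ?count_pred0 ?addn0 // => x /=.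
apply/negP => /andP[Edx /hasP[d' d's Ed'x]]; move: ds.
by rewrite (Euniq x d d') ?inE ?eqxx ?d's ?orbT.
Qed.

Lemma sub_count_lt (T : eqType) (a b : pred T) s x :
  subpred a b -> x \in s -> b x -> ~~ a x -> count a s < count b s.
Proof.
move=> ab; elim: s => // y s IH; rewrite inE => /orP[/eqP <- bx ax | xs bx ax] /=.
  by rewrite bx (negbTE ax) add0n add1n ltnS sub_count.
by rewrite -addnS leq_add ?IH //; case: (boolP (a y)) => [/ab -> | _].
Qed.

Lemma leq_mul_sum_iota k N (f : nat -> nat) D :
  (forall i, k * f i <= D) -> k * \sum_(i <- iota 0 N) f i <= N * D.
Proof.
move=> fD; rewrite big_distrr -[N in leqRHS](size_iota 0).
by elim: (iota 0 N) => [|i s IH]; rewrite ?big_nil ?big_cons //= mulSn leq_add.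
Qed.

Lemma leq_expn2r e m n : m <= n -> m ^ e <= n ^ e.
Proof. by case: e => // e mn; rewrite leq_exp2r. Qed.

Lemma leq_mul_of_ratio a b e x y : 0 < a -> a * x <= b * y -> e * b <= a -> e * x <= y.
Proof.
move=> a_gt0 axby eba; rewrite -(leq_pmul2l a_gt0) mulnCA.
by apply: leq_trans (leq_mul (leqnn e) axby) _; rewrite mulnA leq_mul2r eba orbT.
Qed.

Lemma sub_sub z i j a b : j + b <= a -> sub (sub z i a) j b = sub z (i + j) b.
Proof.
move=> jba; rewrite /sub [LHS]take_drop take_takel; last by rewrite addnC.
by rewrite -take_drop drop_drop addnC.
Qed.

Lemma sub_drop z i j n : sub (drop i z) j n = sub z (i + j) n.
Proof. by rewrite /sub drop_drop addnC. Qed.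

Lemma sub_take z i j n : i + n <= j -> sub (take j z) i n = sub z i n.
Proof. by move=> inj; rewrite /sub !take_drop take_takel // addnC. Qed.

Fixpoint words n : seq (seq bool) :=
  if n is n'.+1 then [seq false :: w | w <- words n'] ++ [seq true :: w | w <- words n']
  else [:: [::]].

Lemma size_words n : size (words n) = 2 ^ n.
Proof. by elim: n => //= n IH; rewrite size_cat !size_map IH expnS mul2n addnn. Qed.

Lemma mem_words n w : (w \in words n) = (size w == n).
Proof.
have mem_map_cons b b' u S : (b :: u \in [seq b' :: v | v <- S]) = (b == b') && (u \in S).
  by apply/mapP/andP => [[v vS [-> ->]] | [/eqP -> uS]]; [rewrite eqxx | exists u].
elim: n w => [|n IH] [|b w] //=.
  by rewrite mem_cat; apply/negP => /orP[] /mapP[].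
by rewrite mem_cat !mem_map_cons IH eqSS; case: b; rewrite /= ?orbF.
Qed.

Lemma words_uniq n : uniq (words n).
Proof.
elim: n => //= n IH; rewrite cat_uniq !map_inj_uniq ?IH ?andbT //= => [|u v [] //|u v [] //].
by apply/hasPn => _ /mapP[u _ ->]; apply/mapP => -[].
Qed.

Lemma count_words_pred1 n w : size w = n -> count (pred1 w) (words n) = 1.
Proof. by move=> sw; rewrite count_uniq_mem ?words_uniq // mem_words sw eqxx. Qed.

Lemma count_words_mem n (C : seq (seq bool)) :
  uniq C -> all (fun w => size w == n) C -> count (mem C) (words n) = size C.
Proof.
move=> uC sC; rewrite -size_filter; apply/perm_size/uniq_perm => //.
  exact: filter_uniq (words_uniq n).
by move=> w; rewrite mem_filter mem_words andb_idr //; apply: (allP sC).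
Qed.

Lemma card_tuple_words m (P : pred (seq bool)) :
  #|[set z : m.-tuple bool | P z]| = count P (words m).
Proof.
rewrite cardsE cardE /enum_mem size_filter -enumT.
rewrite (@eq_count _ _ (P \o val)); last by move=> z; rewrite !inE.
rewrite -count_map; apply/permP/uniq_perm.
- by rewrite (map_inj_uniq val_inj) enum_uniq.
- exact: words_uniq.
- move=> w; rewrite mem_words; apply/mapP/idP => [[z _ ->] | sw].
    by rewrite size_tuple.
  by exists (Tuple sw); rewrite ?mem_enum.
Qed.

Lemma count_words_cat a b (P : seq bool -> pred (seq bool)) :
  count (fun z => P (take a z) (drop a z)) (words (a + b)) =
  \sum_(u <- words a) count (P u) (words b).
Proof.
elim: a P => [|a IH] P /=; first by rewrite big_seq1; apply: eq_count => z; rewrite take0 drop0.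
by rewrite count_cat !count_map big_cat !big_map -!IH.
Qed.

Lemma count_words_take_drop a b (P Q : pred (seq bool)) :
  count (fun z => P (take a z) && Q (drop a z)) (words (a + b)) =
  count P (words a) * count Q (words b).
Proof.
rewrite (count_words_cat a b (fun u v => P u && Q v)) -sum1_count big_distrl [RHS]big_mkcond.
apply: eq_bigr => u _; case: (P u) => /=; first by rewrite mul1n.
by rewrite (@eq_count _ _ pred0) ?count_pred0.
Qed.

Lemma count_words_drop a b (Q : pred (seq bool)) :
  count (fun z => Q (drop a z)) (words (a + b)) = 2 ^ a * count Q (words b).
Proof. by rewrite -size_words -count_predT -count_words_take_drop. Qed.

Lemma count_words_take a b (P : pred (seq bool)) :
  count (fun z => P (take a z)) (words (a + b)) = count P (words a) * 2 ^ b.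
Proof.
rewrite -size_words -count_predT -count_words_take_drop.
by apply: eq_count => z; rewrite andbT.
Qed.

Lemma count_words_sub m i n (P : pred (seq bool)) : i + n <= m ->
  count (fun z => P (sub z i n)) (words m) * 2 ^ n = count P (words n) * 2 ^ m.
Proof.
move=> inm; have -> : m = i + (n + (m - i - n)) by lia.
rewrite (count_words_drop i _ (fun y => P (take n y))) count_words_take !expnD; lia.
Qed.

(* Condition on the first j bits: the window at j must then equal a fixed word. *)
Lemma count_words_sub_eq m n i j : i + n <= j -> j + n <= m ->
  count (fun z => sub z i n == sub z j n) (words m) * 2 ^ n = 2 ^ m.
Proof.
move=> inj jnm; have -> : m = j + (m - j) by lia.
rewrite (eq_count (a2 := fun z => take n (drop j z) == sub (take j z) i n)); last first.
  by move=> z; rewrite /= sub_take // eq_sym.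
rewrite (count_words_cat j _ (fun u v => take n v == sub u i n)).
rewrite (eq_big_seq (fun _ => 2 ^ (m - j - n))); last first.
  move=> u; rewrite mem_words => /eqP su.
  have -> : words (m - j) = words (n + (m - j - n)) by congr words; lia.
  rewrite (count_words_take n _ (pred1 (sub u i n))) count_words_pred1 ?mul1n //.
  by rewrite /sub size_takel // size_drop su; lia.
rewrite big_const_seq count_predT size_words iter_addn_0 -!expnD; congr (2 ^ _); lia.
Qed.

Lemma count_words_blocks q K m (B : pred (seq bool)) : K * q <= m ->
  count (fun z => all (fun r => B (sub z (r * q) q)) (iota 0 K)) (words m) * 2 ^ (K * q) =
  count B (words q) ^ K * 2 ^ m.
Proof.
elim: K m => [|K IH] m Kqm.
  by rewrite (@eq_count _ _ predT) // count_predT size_words mul1n muln1.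
have -> : m = q + (m - q) by lia.
rewrite (eq_count (a2 := fun z => B (take q z) &&
          all (fun r => B (sub (drop q z) (r * q) q)) (iota 0 K))); last first.
  move=> z; rewrite /= -[1]/(1 + 0) iotaDl all_map /sub drop0; congr (_ && _).
  by apply: eq_all => r /=; rewrite drop_drop mulSn addnC.
rewrite (count_words_take_drop q _ B (fun y => all (fun r => B (sub y (r * q) q)) (iota 0 K))).
rewrite mulSn expnD -mulnA (mulnCA (count _ (words (m - q)))) IH; last by lia.
by rewrite expnS expnD; lia.
Qed.

Lemma count_words_not_all_le m (F : nat -> seq bool -> pred nat) :
  count (fun z => ~~ all (F (size z) z) (iota 0 (size z).+1)) (words m) <=
  \sum_(i <- iota 0 m.+1) count (fun z => ~~ F m z i) (words m).
Proof.
rewrite (eq_in_count (a2 := fun z => ~~ all (F m z) (iota 0 m.+1))); first exact: count_not_all_le.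
by move=> z; rewrite mem_words => /eqP ->.
Qed.

Lemma mu_code_no_overlap n C x d d' : mu_code n C -> d < d' < d + n ->
  sub x d n \in C -> sub x d' n \in C -> False.
Proof.
move=> muC /andP[dd' d'dn] dC d'C; set k := n - (d' - d).
have kn : k \in iota 0 n by rewrite mem_iota; lia.
have k_gt0 : 0 < k by lia.
move/allP: muC => /(_ _ d'C) /allP /(_ _ dC) /allP /(_ _ kn) /implyP /(_ k_gt0) /negP; apply.
have -> : n - k = d' - d by lia.
rewrite /sub take_takel; last by lia.
rewrite [in take n _](_ : n = k + (d' - d)); last by lia.
by rewrite -take_drop drop_drop subnK // ltnW.
Qed.

Definition codeword_free n (C : seq (seq bool)) x :=
  ~~ has (fun d => sub x d n \in C) (iota 0 n).

Lemma count_codeword_free k n C : 0 < n -> uniq C -> all (fun w => size w == n) C ->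
  mu_code n C -> 2 ^ n <= k * n * size C ->
  k * count (codeword_free n C) (words (2 * n - 1)) <= k.-1 * 2 ^ (2 * n - 1).
Proof.
move=> n_gt0 uC sC muC denseC; set q := 2 * n - 1.
have hit : count (predC (codeword_free n C)) (words q) * 2 ^ n = n * size C * 2 ^ q.
  rewrite (eq_count (a2 := fun x => has (fun d => sub x d n \in C) (iota 0 n))); last first.
    by move=> x; rewrite /= negbK.
  rewrite -sum_count_disjoint ?iota_uniq //; last first.
    move=> x d d'; rewrite !mem_iota !add0n => /andP[_ dn] /andP[_ d'n] dC d'C.
    case: (ltngtP d d') => // dd'; exfalso;
      [apply: (mu_code_no_overlap muC _ dC d'C) | apply: (mu_code_no_overlap muC _ d'C dC)]; lia.
  rewrite big_distrl /= (eq_big_seq (fun _ => size C * 2 ^ q)); last first.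
    move=> d; rewrite mem_iota add0n => /andP[_ dn].
    by rewrite count_words_sub ?count_words_mem //; lia.
  by rewrite big_const_seq count_predT size_iota iter_addn_0 mulnC mulnA.
have all_q := count_predC (codeword_free n C) (words q); rewrite size_words in all_q.
have hit_q : 2 ^ q <= k * count (predC (codeword_free n C)) (words q).
  rewrite -(leq_pmul2r (expn_gt0 2 n)) -mulnA hit mulnA mulnC leq_mul2r.
  by rewrite mulnA denseC orbT.
by have := congr1 (muln k) all_q; rewrite mulnDr -subn1 mulnBl mul1n; lia.
Qed.

Lemma lexlt_trans u v w : lexlt u v -> lexlt v w -> lexlt u w.
Proof.
elim: u v w => [|x u IH] [|y v] [|z w] //=.
by case: x; case: y; case: z => //=; apply: IH.
Qed.

Lemma lexlt_irr u : ~~ lexlt u u.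
Proof. by elim: u => //= x u IH; case: x. Qed.

Lemma lexlt_total u v : size u = size v -> u != v -> lexlt u v || lexlt v u.
Proof.
elim: u v => [|x u IH] [|y v] //= [] suv.
by case: x; case: y => //= uv; apply: IH => //; apply: contra uv => /eqP ->.
Qed.

(* The rank of a codeword (the number of codewords below it) is injective on C
   and at most t on markers. *)
Lemma count_markers_le n C t : uniq C -> all (fun w => size w == n) C ->
  count (is_marker C t) (words n) <= t.+1.
Proof.
move=> uC sC; pose rank w := count (fun u => lexlt u w) C.
have rank_lt u v : u \in C -> lexlt u v -> rank u < rank v.
  move=> uC' uv; apply: (sub_count_lt (x := u)) => // [w wu|]; last exact: lexlt_irr.
  exact: lexlt_trans wu uv.
have rank_inj : {in C &, injective rank}.
  move=> u v uC' vC' ruv; apply/eqP; apply: contraT => uv.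
  have suv : size u = size v by rewrite (eqP (allP sC _ uC')) (eqP (allP sC _ vC')).
  by case/orP: (lexlt_total suv uv) => /rank_lt => [/(_ uC')|/(_ vC')]; rewrite ruv ltnn.
set M := filter (is_marker C t) C.
have cM : count (is_marker C t) (words n) <= size M.
  rewrite -size_filter; apply: uniq_leq_size; first exact: filter_uniq (words_uniq n).
  by move=> w; rewrite !mem_filter => /andP[wM _]; rewrite wM; case/andP: wM.
apply: leq_trans cM _; rewrite -(size_map rank) -(size_iota 0 t.+1).
apply: uniq_leq_size.
  rewrite map_inj_in_uniq ?filter_uniq // => u v; rewrite !mem_filter => /andP[_ uC'] /andP[_ vC'].
  exact: rank_inj.
by move=> r /mapP[w]; rewrite mem_filter => /andP[/andP[_ rw] _] ->; rewrite mem_iota.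
Qed.

Definition signatures_dense n L (C : seq (seq bool)) z :=
  all (fun i => (i + L <= size z) ==>
         has (fun j => (j + n <= L) && (sub z (i + j) n \in C)) (iota 0 L))
      (iota 0 (size z).+1).

Definition windows_distinct n z :=
  all (fun i => all (fun j => ((i + n <= j) && (j + n <= size z)) ==>
         (sub z i n != sub z j n)) (iota 0 (size z).+1)) (iota 0 (size z).+1).

Definition markers_absent n C t z :=
  all (fun i => (i + n <= size z) ==> ~~ is_marker C t (sub z i n)) (iota 0 (size z).+1).

Lemma signature_gap_blocks n L K C z i : 0 < n -> K * (2 * n - 1) <= L ->
  ~~ has (fun j => (j + n <= L) && (sub z (i + j) n \in C)) (iota 0 L) ->
  all (fun r => codeword_free n C (sub (drop i z) (r * (2 * n - 1)) (2 * n - 1))) (iota 0 K).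
Proof.
move=> n_gt0 KqL /hasPn gap; set q := 2 * n - 1 in KqL *; have qn : q.+1 = n + n by lia.
apply/allP => r; rewrite mem_iota => /andP[_ rK].
have rqL : q + r * q <= L by apply: leq_trans KqL; rewrite -mulSn leq_mul2r rK orbT.
apply/hasPn => d; rewrite mem_iota => /andP[_ dn].
rewrite sub_sub ?sub_drop; last by lia.
apply: contraNN (gap (r * q + d) _) => [dC|]; first by rewrite dC andbT; lia.
by rewrite mem_iota; lia.
Qed.

Lemma count_signature_gap n L K C m i : 0 < n -> K * (2 * n - 1) <= L ->
  count (fun z => ~~ ((i + L <= m) ==>
           has (fun j => (j + n <= L) && (sub z (i + j) n \in C)) (iota 0 L))) (words m)
    * 2 ^ (K * (2 * n - 1)) <=
  count (codeword_free n C) (words (2 * n - 1)) ^ K * 2 ^ m.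
Proof.
move=> n_gt0 KqL; set q := 2 * n - 1.
case: (boolP (i + L <= m)) => [iLm | _] /=; last by rewrite (@eq_count _ _ pred0) ?count_pred0.
pose blocks y := all (fun r => codeword_free n C (sub y (r * q) q)) (iota 0 K).
apply: leq_trans (_ : count (fun z => blocks (drop i z)) (words m) * 2 ^ (K * q) <= _).
  by rewrite leq_mul2r; apply/orP; right; apply: sub_count => z; apply: signature_gap_blocks.
have -> : m = i + (m - i) by lia.
rewrite count_words_drop -mulnA count_words_blocks; last by lia.
by rewrite mulnCA -expnD subnKC ?leq_addr // (leq_trans _ iLm) ?leq_addr.
Qed.

Lemma count_not_signatures_dense k n L K C m : 0 < n -> K * (2 * n - 1) <= L ->
  uniq C -> all (fun w => size w == n) C -> mu_code n C -> 2 ^ n <= k * n * size C ->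
  k ^ K * count (fun z => ~~ signatures_dense n L C z) (words m) <= m.+1 * (k.-1 ^ K * 2 ^ m).
Proof.
move=> n_gt0 KqL uC sC muC denseC; set q := 2 * n - 1.
apply: leq_trans (leq_mul (leqnn _) (count_words_not_all_le m
  (fun s z i => (i + L <= s) ==>
     has (fun j => (j + n <= L) && (sub z (i + j) n \in C)) (iota 0 L)))) _.
apply: leq_mul_sum_iota => i.
rewrite -(leq_pmul2r (expn_gt0 2 (K * q))) -mulnA.
apply: leq_trans (leq_mul (leqnn _) (count_signature_gap C m i n_gt0 KqL)) _.
rewrite mulnA -expnMn [leqRHS]mulnAC (mulnC K) expnM -expnMn leq_mul2r.
by rewrite leq_expn2r ?count_codeword_free ?orbT.
Qed.

Lemma count_not_windows_distinct n m :
  2 ^ n * count (fun z => ~~ windows_distinct n z) (words m) <= m.+1 * (m.+1 * 2 ^ m).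
Proof.
apply: leq_trans (leq_mul (leqnn _) (count_words_not_all_le m (fun s z i =>
  all (fun j => ((i + n <= j) && (j + n <= s)) ==> (sub z i n != sub z j n)) (iota 0 s.+1)))) _.
apply: leq_mul_sum_iota => i.
apply: leq_trans (leq_mul (leqnn _) (count_not_all_le
  (fun z j => ((i + n <= j) && (j + n <= m)) ==> (sub z i n != sub z j n)) _ _)) _.
apply: leq_mul_sum_iota => j.
case: (boolP ((i + n <= j) && (j + n <= m))) => [/andP[inj jnm] | _] /=; last first.
  by rewrite (@eq_count _ _ pred0) ?count_pred0 ?muln0.
rewrite mulnC (eq_count (a2 := fun z => sub z i n == sub z j n)) => [|z]; last exact: negbK.
by rewrite count_words_sub_eq.
Qed.

Lemma count_not_markers_absent n C t m : uniq C -> all (fun w => size w == n) C ->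
  2 ^ n * count (fun z => ~~ markers_absent n C t z) (words m) <= m.+1 * (t.+1 * 2 ^ m).
Proof.
move=> uC sC; apply: leq_trans (leq_mul (leqnn _) (count_words_not_all_le m
  (fun s z i => (i + n <= s) ==> ~~ is_marker C t (sub z i n)))) _.
apply: leq_mul_sum_iota => i.
case: (boolP (i + n <= m)) => [inm | _] /=; last first.
  by rewrite (@eq_count _ _ pred0) ?count_pred0 ?muln0.
rewrite mulnC (eq_count (a2 := fun z => is_marker C t (sub z i n))) => [|z]; last exact: negbK.
by rewrite count_words_sub // leq_mul2r count_markers_le ?orbT.
Qed.

Lemma leq_expn31_32 : 31 ^ 256 * 2 ^ 10 <= 32 ^ 256.
Proof. lia. Qed.

Lemma leq_expn_decay a b l : a <= b -> a ^ 256 * 2 ^ 10 <= b ^ 256 ->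
  a ^ (32 * l) * 2 ^ (10 * (l %/ 8)) <= b ^ (32 * l).
Proof.
move=> ab ab256; set p := l %/ 8.
have -> : 32 * l = 256 * p + 32 * (l %% 8) by rewrite {1}(divn_eq l 8) mulnDr (mulnC _ 8) mulnA.
rewrite expnD (expnD b) !(expnM _ 256 p) (expnM 2 10 p) mulnAC -expnMn.
by rewrite leq_mul ?leq_expn2r.
Qed.

Lemma legit_thresholds c l m : 3 <= c -> 100 <= l -> m <= 2 ^ l ->
  3 * 2 ^ (l %/ 8).+1 * (m.+1 * 31 ^ (32 * l)) <= 32 ^ (32 * l) /\
  3 * 2 ^ (l %/ 8).+1 * (m.+1 * m.+1) <= 2 ^ (c * l).
Proof.
move=> c_ge3 l_ge m_le; set D := 2 ^ (l %/ 8).+1.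
have mS : m.+1 <= 2 ^ l.+1 by rewrite expnS; have := expn_gt0 2 l; lia.
have cl_ge : 3 * l <= c * l by rewrite leq_mul2r c_ge3 orbT.
have small : 3 * D * m.+1 <= 2 ^ (l %/ 8 + l + 4).
  apply: leq_trans (_ : 2 ^ 2 * D * 2 ^ l.+1 <= _); first by rewrite !leq_mul.
  by rewrite -!expnD; apply: leq_pexp2l; lia.
split; rewrite mulnA.
  apply: leq_trans (leq_expn_decay l _ leq_expn31_32) => //.
  rewrite mulnC leq_mul2l; apply/orP; right.
  by apply: leq_trans small _; apply: leq_pexp2l; lia.
apply: leq_trans (leq_mul small mS) _.
by rewrite -expnD; apply: leq_pexp2l; lia.
Qed.

Lemma count_not_legit_mul_le c m t C : 3 <= c -> 100 <= lg m -> t < m -> uniq C ->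
  all (fun w => size w == c * lg m) C -> mu_code (c * lg m) C ->
  2 ^ (c * lg m) <= 32 * (c * lg m) * size C ->
  count (fun z => ~~ legit c m t C z) (words m) * 2 ^ (lg m %/ 8).+1 <= 2 ^ m.
Proof.
move=> c_ge3 l_ge tm uC sC muC denseC.
set l := lg m in l_ge sC muC denseC *; set n := c * l in sC muC denseC *.
have [D1 D2] := legit_thresholds c_ge3 l_ge (up_logP m (ltnSn 1)).
have D3 : 3 * 2 ^ (l %/ 8).+1 * (m.+1 * t.+1) <= 2 ^ n.
  by apply: leq_trans D2; rewrite !leq_mul2l ltnW ?orbT.
have n_gt0 : 0 < n by rewrite muln_gt0; apply/andP; split; lia.
have KqL : 32 * l * (2 * n - 1) <= ell c m by rewrite /ell /beta -/l; nia.
have X1 := count_not_signatures_dense m n_gt0 KqL uC sC muC denseC.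
have X2 := count_not_windows_distinct n m.
have X3 := count_not_markers_absent t m uC sC.
rewrite !mulnA in X1 X2 X3.
have Y1 := leq_mul_of_ratio (expn_gt0 32 _) X1 D1.
have Y2 := leq_mul_of_ratio (expn_gt0 2 n) X2 D2.
have Y3 := leq_mul_of_ratio (expn_gt0 2 n) X3 D3.
have union : count (fun z => ~~ legit c m t C z) (words m) <=
    count (fun z => ~~ signatures_dense n (ell c m) C z) (words m) +
    count (fun z => ~~ windows_distinct n z) (words m) +
    count (fun z => ~~ markers_absent n C t z) (words m) := count_not_and3_le _ _ _ _.
have := leq_mul (leqnn (3 * 2 ^ (l %/ 8).+1)) union; rewrite !mulnDr; lia.
Qed.

Theorem theorem7 :
  forall c : nat, 3 <= c ->
  exists a b M : nat, 0 < a /\ 0 < b /\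
  forall (m t : nat) (C : seq (seq bool)),
    M <= m -> 1 <= t -> t < m ->
    uniq C ->
    all (fun w => size w == c * lg m) C ->
    mu_code (c * lg m) C ->
    2 ^ (c * lg m) <= beta * (c * lg m) * size C ->
    #|[set z : m.-tuple bool | ~~ legit c m t C z]| ^ b * m ^ a <= (2 ^ m) ^ b.
Proof.
move=> c c_ge3; exists 1, 8, (2 ^ 100); do 2!split => //.
move=> m t C m_ge _ tm uC sC muC denseC.
have m_le := up_logP m (ltnSn 1).
have l_ge : 100 <= lg m by rewrite -(leq_exp2l _ _ (ltnSn 1)) (leq_trans m_ge).
have m_le8 : m <= (2 ^ (lg m %/ 8).+1) ^ 8.
  rewrite -expnM; apply: (leq_trans m_le); rewrite leq_exp2l // mulSn.
  by rewrite [X in X <= _](divn_eq _ 8) addnC leq_add2r ltnW ?ltn_pmod.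
rewrite (card_tuple_words m (fun z => ~~ legit c m t C z)) expn1.
apply: (leq_trans (leq_mul (leqnn _) m_le8)).
by rewrite -expnMn leq_exp2r // count_not_legit_mul_le.
Qed.
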